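(* Let $X=\{X^1,\dots,X^m\}\subseteq S_n$ and let $M_X$ be the $m\times n$ real matrix whose $i$-th row is $X^i$. If the columns of $M_X$ are linearly dependent over $\mathbb{R}$, then $\mathrm{Elim}(X)\neq S_n$. In particular, if $\mathrm{Elim}(X)=S_n$ and $|X|=n$, then $X^1,\dots,X^n$ are linearly independent.
   Context: $S_n$ is the set of all nonzero $n$-tuples in $\{-1,0,1\}^n$ whose first nonzero entry equals $1$. A tuple $t=(t_1,\dots,t_n)\in\{1,0,-1,u\}^n$ ($u$ a formal symbol) eliminates $s\in S_n$ if: (i) $t_i\neq0$ and $s_i\neq0$ for some $i$; (ii) there is $k\in\{+1,-1\}$ with $t_i=ks_i$ for all $i$ with $s_i\neq0$ and $t_i\neq0$; (iii) $s_i=0$ whenever $t_i=u$. For $X\subseteq S_n$, $\mathrm{Elim}(X)$ is the set of elements of $S_n$ eliminated by at least one element of $X$. *)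

From HB Require Import structures.
From mathcomp Require Import all_boot all_order all_algebra.
Set Implicit Arguments. Unset Strict Implicit. Unset Printing Implicit Defensive.
Import Order.TTheory GRing.Theory Num.Theory.
Local Open Scope ring_scope.

(* An n-tuple over {-1,0,1} is represented as s : 'I_n -> int. *)
Definition trit (z : int) : bool := (z == -1) || (z == 0) || (z == 1).

Definition inS (n : nat) (s : 'I_n -> int) : Prop :=
  (forall i, trit (s i)) /\
  (exists i : 'I_n, s i = 1 /\ forall j : 'I_n, (j < i)%N -> s j = 0).

(* Elimination tuples over {1,0,-1,u}: None stands for the formal symbol u,
   Some z for z \in {-1,0,1}. *)
Definition eliminates (n : nat) (t : 'I_n -> option int) (s : 'I_n -> int) : Prop :=
  (exists i, t i <> Some 0 /\ s i != 0) /\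
  (exists k : int, (k = 1 \/ k = -1) /\
     forall i, s i != 0 -> t i <> Some 0 -> t i = Some (k * s i)) /\
  (forall i, t i = None -> s i = 0).

Definition as_tuple (n : nat) (x : 'I_n -> int) : 'I_n -> option int :=
  fun i => Some (x i).

Definition inElim (n m : nat) (X : 'I_m -> 'I_n -> int) (s : 'I_n -> int) : Prop :=
  inS s /\ exists i : 'I_m, eliminates (as_tuple (X i)) s.

Definition ElimFull (n m : nat) (X : 'I_m -> 'I_n -> int) : Prop :=
  forall s : 'I_n -> int, inS s <-> inElim X s.

Definition MX (R : realFieldType) (n m : nat) (X : 'I_m -> 'I_n -> int) : 'M[R]_(m, n) :=
  \matrix_(i < m, j < n) ((X i j)%:~R).

From HB Require Import structures.
From mathcomp Require Import all_boot all_order all_algebra.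

Set Implicit Arguments.
Unset Strict Implicit.
Unset Printing Implicit Defensive.

Import GRing.Theory Num.Theory.
Local Open Scope ring_scope.

(* If [M c = 0] with [c != 0], normalise the sign vector of [c] so that its
   first nonzero entry is [1]; this gives some [s] in [S_n].  Were [s]
   eliminated by a row [x] of [M], then on the common support [x] would be
   [k * s = +-sgz c], so [x . c] would be [+-] a sum of [|c_j|] containing at
   least one nonzero term, contradicting [x . c = 0].  For square [M], a
   nonzero left kernel forces a nonzero right kernel. *)

Section SignPattern.

Variables (R : realDomainType) (n : nat).

Lemma trit_sign_sgz (e : int) (x : R) : (e = 1 \/ e = -1) -> trit (e * sgz x).
Proof. by rewrite /trit => -[] ->; case: sgzP. Qed.

Lemma sgz_pattern_inS (c : 'I_n -> R) (j1 : 'I_n) : c j1 != 0 ->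
  exists2 e : int, (e = 1 \/ e = -1) & inS (fun j => e * sgz (c j)).
Proof.
move=> cj1.
case: (@arg_minnP _ j1 (fun j => c j != 0) val cj1) => j0 cj0 j0_min.
have e_sign : sgz (c j0) = 1 \/ sgz (c j0) = -1.
  by move: cj0; case: sgzP; auto.
exists (sgz (c j0)) => //; split=> [j|]; first exact: trit_sign_sgz.
exists j0; split; first by case: e_sign => ->.
move=> j lt_j_j0; apply/eqP; rewrite mulf_eq0; apply/orP; right.
by apply: contraLR lt_j_j0; rewrite sgz_eq0 -leqNgt; apply: j0_min.
Qed.

Lemma eliminates_sgz_dot_neq0 (x : 'I_n -> int) (c : 'I_n -> R) (e : int) :
    (e = 1 \/ e = -1) -> eliminates (as_tuple x) (fun j => e * sgz (c j)) ->
  \sum_j (x j)%:~R * c j != 0.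
Proof.
move=> e_sign [[i0 [xi0 si0]] [[k [k_sign agree]] _]].
rewrite /as_tuple in xi0 agree.
have xi0_neq0 : x i0 != 0 by apply: contra_notN xi0 => /eqP ->.
have ci0_neq0 : c i0 != 0 by move: si0; rewrite mulf_eq0 sgz_eq0 negb_or => /andP[].
pose T j := if x j == 0 then 0 else `|c j|.
have term j : (x j)%:~R * c j = (k * e)%:~R * T j.
  rewrite /T; have [->|xj_neq0] := eqVneq (x j) 0; first by rewrite mul0r mulr0.
  have [->|cj_neq0] := eqVneq (c j) 0; first by rewrite normr0 !mulr0.
  have sj_neq0 : e * sgz (c j) != 0.
    by rewrite mulf_neq0 ?sgz_eq0 //; case: e_sign => ->.
  have [->] : Some (x j) = Some (k * (e * sgz (c j))).
    by apply: agree => // -[] /eqP; rewrite (negbTE xj_neq0).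
  by rewrite mulrA intrM -mulrA -sgrEz -normrEsg.
rewrite (eq_bigr _ (fun j _ => term j)) -mulr_sumr mulf_neq0 //.
  by rewrite intr_eq0 mulf_neq0 //; [case: k_sign | case: e_sign] => ->.
rewrite psumr_neq0 => [|j _]; last by rewrite /T; case: ifP.
by apply/hasP; exists i0; rewrite ?mem_index_enum //= /T (negbTE xi0_neq0) normr_gt0.
Qed.

End SignPattern.

Lemma ElimFull_mulmx_eq0 (R : realFieldType) (n m : nat) (X : 'I_m -> 'I_n -> int) :
  ElimFull X -> forall c : 'cV[R]_n, MX R X *m c = 0 -> c = 0.
Proof.
move=> full c Mc0; apply/matrixP => j1 j0; rewrite (ord1 j0) mxE.
apply/eqP/contraT => /(@sgz_pattern_inS _ _ (fun j => c j 0)).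
case=> e e_sign /full [_ [i elim_i]].
have row_i : \sum_j (X i j)%:~R * c j 0 = 0.
  by have /matrixP/(_ i 0) := Mc0; rewrite !mxE; under eq_bigr do rewrite mxE.
by have := eliminates_sgz_dot_neq0 e_sign elim_i; rewrite row_i eqxx.
Qed.

Lemma mulmx_left_eq0 (F : fieldType) (n : nat) (A : 'M[F]_n) :
  (forall c : 'cV_n, A *m c = 0 -> c = 0) -> forall a : 'rV_n, a *m A = 0 -> a = 0.
Proof.
move=> kerA0 a aA0.
have A_unit : A \in unitmx.
  rewrite unitmxE unitfE -det_tr; apply/det0P => -[v v_neq0 vA0].
  apply: (negP v_neq0); rewrite -trmx_eq0; apply/eqP/kerA0.
  by rewrite -[A]trmxK -trmx_mul vA0 trmx0.
by rewrite -(mulmxK A_unit a) aA0 mul0mx.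
Qed.

Theorem mainTheorem4 (R : realFieldType) (n m : nat) (X : 'I_m -> 'I_n -> int)
    (Xinj : injective X) (XS : forall i, inS (X i)) :
  ((exists c : 'cV[R]_n, c != 0 /\ MX R X *m c = 0) -> ~ ElimFull X) /\
  (ElimFull X -> m = n -> forall a : 'rV[R]_m, a *m MX R X = 0 -> a = 0).
Proof.
split=> [[c [c_neq0 Mc0]] full | full Emn].
  by move/eqP: c_neq0; apply; apply: ElimFull_mulmx_eq0 Mc0.
by subst m; apply: mulmx_left_eq0; apply: ElimFull_mulmx_eq0.
Qed.
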